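(* Let $(E,X,Y)$, with $X=(X_1,\dots,X_d)$, be generated by a structural causal model whose graph $\mathcal{G}$ is a DAG, whose distribution is faithful (and Markov) with respect to $\mathcal{G}$, and in which $E$ is exogenous (i.e. $E$ has no parents). If $E\notin\mathrm{PA}_Y$, then $$S_{\mathrm{ICP}}=\mathrm{PA}_Y\cap\big(\mathrm{CH}_E\cup\mathrm{PA}(\mathrm{AN}_Y\cap\mathrm{CH}_E)\big).$$
   Context: In the DAG $\mathcal{G}$, $\mathrm{PA}_v$, $\mathrm{CH}_v$, $\mathrm{AN}_v$ denote the parents, children and ancestors of a node $v$ (not containing $v$), and for a set $A$ of nodes $\mathrm{PA}(A)=\bigcup_{v\in A}\mathrm{PA}_v$. Nodes $j\in[d]=\{1,\dots,d\}$ are identified with the variables $X_j$. A set $S\subseteq[d]$ is invariant if $Y\perp\!\!\!\perp E\mid X_S$, where $X_S=(X_j)_{j\in S}$; $\mathcal{I}$ is the collection of invariant sets, and $S_{\mathrm{ICP}}=\bigcap_{S\in\mathcal{I}}S$ (with $S_{\mathrm{ICP}}=\emptyset$ if $\mathcal{I}=\emptyset$). *)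

From mathcomp Require Import all_boot.
Set Implicit Arguments. Unset Strict Implicit. Unset Printing Implicit Defensive.

Definition node (d : nat) : finType := (bool + 'I_d)%type.
Definition nE {d : nat} : node d := inl true.
Definition nY {d : nat} : node d := inl false.
Definition nX {d : nat} (j : 'I_d) : node d := inr j.

Section Graph.
Variable V : finType.
Variable G : rel V.   (* G u v  <=>  there is a directed edge u -> v *)

Definition anc (u v : V) : bool := [exists w, G u w && connect G w v].
Definition acyclic : Prop := forall v, ~~ anc v v.

Definition pa (v : V) : {set V} := [set u | G u v].
Definition ch (v : V) : {set V} := [set w | G v w].
Definition an (v : V) : {set V} := [set u | anc u v].
Definition paS (A : {set V}) : {set V} := \bigcup_(v in A) pa v.

Definition adj (u v : V) : bool := G u v || G v u.

Definition triple_ok (C : {set V}) (x y z : V) : bool :=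
  if G x y && G z y then [exists w in C, connect G y w] else y \notin C.

Fixpoint triples_ok (C : {set V}) (x y : V) (s : seq V) : bool :=
  match s with
  | [::] => true
  | z :: s' => triple_ok C x y z && triples_ok C y z s'
  end.

Definition active_path (C : {set V}) (a : V) (s : seq V) : bool :=
  [&& uniq (a :: s), path adj a s &
      match s with [::] => true | y :: s' => triples_ok C a y s' end].

Definition dsep (A B C : {set V}) : Prop :=
  ~ exists a b s, [/\ a \in A, b \in B, last a s = b & active_path C a s].
End Graph.

Section ICP.
Variable d : nat.
(* independence model of the distribution of (E, X, Y):
   indep A B C  <=>  X_A is independent of X_B given X_C *)
Variable indep : {set node d} -> {set node d} -> {set node d} -> bool.

Definition Xset (S : {set 'I_d}) : {set node d} := [set nX j | j in S].

Definition invariant (S : {set 'I_d}) : bool := indep [set nY] [set nE] (Xset S).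

Definition S_ICP : {set 'I_d} :=
  if [exists S, invariant S] then \bigcap_(S | invariant S) S else set0.
End ICP.

Definition markov_faithful (V : finType) (G : rel V)
    (indep : {set V} -> {set V} -> {set V} -> bool) : Prop :=
  forall A B C : {set V}, [disjoint A & B] -> [disjoint A & C] -> [disjoint B & C] ->
    (indep A B C <-> dsep G A B C).

From Pilot Require Import Defs.
From mathcomp Require Import all_boot.
Set Implicit Arguments. Unset Strict Implicit. Unset Printing Implicit Defensive.

(* By the Markov property and faithfulness, S is invariant iff X_S d-separates
   Y from E.  The parents of Y form an invariant set: a d-connecting path from Y
   that leaves Y along an out-edge can meet no collider (no descendant of Y is a
   parent of Y), so it is directed and cannot end in the source E; one entering
   Y through a parent is blocked there, since E is not a parent of Y.  Hence
   S_ICP is contained in PA_Y.  A parent X_j of Y outside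
   CH_E u PA(AN_Y n CH_E) is left out by the invariant set AN_Y \ {X_j}: a
   d-connecting path from E must first enter an ancestor of Y, which is then a
   conditioned collider, and its other neighbour is a conditioned non-collider.
   Conversely, if X_j is a child of E, or a parent of a child k of E in AN_Y,
   then for every S not containing j one of E -> X_j -> Y, E -> k <- X_j -> Y
   or a directed path E -> k -> ... -> Y is d-connecting given X_S. *)

Section DConnection.
Variables (V : finType) (G : rel V).
Implicit Types (A B C : {set V}) (a b r u v w x y z : V) (l s : seq V).

Definition triples_ok_seq (C : {set V}) (l : seq V) : bool :=
  if l is x :: y :: s then triples_ok G C x y s else true.

Lemma triple_okC C x y z : triple_ok G C x y z = triple_ok G C z y x.
Proof. by rewrite /triple_ok andbC. Qed.

Lemma triple_ok_collider C x y z :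
  y \in C -> triple_ok G C x y z -> G x y && G z y.
Proof. by rewrite /triple_ok => yC; case: (G x y && G z y); rewrite ?yC. Qed.

Lemma triples_ok_seq_cons C x l :
  triples_ok_seq C (x :: l) =
  triples_ok_seq C l && (if l is y :: z :: _ then triple_ok G C x y z else true).
Proof. by case: l => [|y [|z l]] //=; rewrite andbC. Qed.

Lemma triples_ok_seq_rcons C l x y z :
  triples_ok_seq C (rcons (rcons (rcons l x) y) z) =
  triples_ok_seq C (rcons (rcons l x) y) && triple_ok G C x y z.
Proof.
elim: l => [|w l IH]; first by rewrite /= andbT.
rewrite !rcons_cons !triples_ok_seq_cons IH.
by case: l {IH} => [|u [|v l]] /=; [apply: andbC | apply: andbAC | apply: andbAC].
Qed.

Lemma triples_ok_seq_rev C l : triples_ok_seq C (rev l) = triples_ok_seq C l.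
Proof.
elim: l => [|x l IH] //; case: l IH => [|y [|z l]] IH //.
rewrite !rev_cons in IH; rewrite !rev_cons.
by rewrite triples_ok_seq_rcons IH triple_okC /= andbC.
Qed.

Lemma active_path_rev C a s :
  active_path G C a s -> active_path G C (last a s) (rev (belast a s)).
Proof.
have rev_as : last a s :: rev (belast a s) = rev (a :: s).
  by rewrite [in RHS]lastI rev_rcons.
case/and3P=> uniq_as path_as ok_as; apply/and3P; split.
- by rewrite rev_as rev_uniq.
- by rewrite rev_path; apply: sub_path path_as => u v; rewrite /adj orbC.
- change (triples_ok_seq C (last a s :: rev (belast a s))).
  by rewrite rev_as triples_ok_seq_rev.
Qed.

Lemma dsep_sym A B C : dsep G A B C -> dsep G B A C.
Proof.
move=> sepAB [b [a [s [bB aA last_s act_s]]]]; subst a; apply: sepAB.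
exists (last b s), b, (rev (belast b s)); split=> //.
  case: s {aA act_s} => [|y s] //.
  by rewrite -[belast _ _]/(b :: belast y s) rev_cons last_rcons.
exact: active_path_rev.
Qed.

(* With no conditioned descendant of y, the path can never pass a collider. *)
Lemma active_path_directed C x y s :
  G x y -> (forall w, connect G y w -> w \notin C) ->
  path (adj G) y s -> triples_ok G C x y s -> path G y s.
Proof.
elim: s x y => [|z s IH] x y //= Gxy noC /andP[adj_yz adj_s] /andP[ok_xyz ok_s].
have Gyz : G y z.
  move: ok_xyz adj_yz; rewrite /triple_ok /adj Gxy /=.
  case: (G z y) => [/exists_inP[w wC yw] | _]; last by rewrite orbF.
  by rewrite (negbTE (noC w yw)) in wC.
rewrite Gyz; apply: (IH y z Gyz _ adj_s ok_s) => w zw.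
by apply: noC; apply: connect_trans (connect1 Gyz) zw.
Qed.

Lemma connect_to_source r u : (forall v, ~~ G v r) -> connect G u r -> u = r.
Proof.
move=> srcr /connectP[p]; elim/last_ind: p => [|p w _] /=; first by move=> _ ->.
rewrite rcons_path last_rcons => /andP[_ Gpw] wr.
by move: (srcr (last u p)); rewrite wr Gpw.
Qed.

Hypothesis acyclicG : acyclic G.

Lemma edge_not_connect_back u v : G u v -> ~~ connect G v u.
Proof.
move=> Guv; apply: contra (acyclicG u) => vu.
by apply/existsP; exists v; rewrite Guv.
Qed.

Lemma acyclic_irrefl u : ~~ G u u.
Proof. by apply/negP => /edge_not_connect_back; rewrite connect0. Qed.

Lemma acyclic_asym u v : G u v -> ~~ G v u.
Proof. by move/edge_not_connect_back; apply: contra; apply: connect1. Qed.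

Lemma ancE u v : anc G u v = (u != v) && connect G u v.
Proof.
apply/idP/andP => [ancuv | [neq_uv /connectP[[|w p] /= pG lastv]]].
- split; first by apply: contraNneq (acyclicG u) => uv; rewrite {2}uv.
  by case/existsP: ancuv => w /andP[Guw wv]; apply: connect_trans (connect1 Guw) wv.
- by rewrite lastv eqxx in neq_uv.
- case/andP: pG => Guw wp; apply/existsP; exists w; rewrite Guw.
  by apply/connectP; exists p.
Qed.

Lemma directed_triples_ok C x y s :
  G x y -> path G y s -> {in y :: s, forall w, w \notin C} -> triples_ok G C x y s.
Proof.
elim: s x y => [|z s IH] x y //= Gxy /andP[Gyz zs] noC.
rewrite {1}/triple_ok (negbTE (acyclic_asym Gyz)) andbF noC ?mem_head //=.
by apply: IH => // w ws; apply: noC; rewrite inE ws orbT.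
Qed.

Lemma directed_path_active C x y b :
  G x y -> connect G y b -> (forall w, connect G y w -> w \notin C) ->
  exists s, last x s = b /\ active_path G C x s.
Proof.
move=> Gxy /connectP[p0 p0G ->] noC; case: (shortenP p0G) => p pG uniq_yp _.
have desc_y : {subset y :: p <= connect G y} := path_connect pG.
exists (y :: p); split=> //; apply/and3P; split.
- rewrite cons_uniq uniq_yp andbT.
  by apply/negP => /desc_y; apply/negP: (edge_not_connect_back Gxy).
- rewrite /= {1}/adj Gxy /=.
  by apply: sub_path pG => u v Guv; rewrite /adj Guv.
- by apply: directed_triples_ok => // w /desc_y; apply: noC.
Qed.

End DConnection.

Section InvariantSets.
Variables (d : nat) (G : rel (node d)).
Variable indep : {set node d} -> {set node d} -> {set node d} -> bool.
Hypothesis acyclicG : acyclic G.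
Hypothesis mfG : markov_faithful G indep.
Hypothesis sourceE : forall v : node d, ~~ G v nE.
Hypothesis E_npaY : nE \notin pa G nY.
Implicit Types (S : {set 'I_d}) (A : {set node d}) (j k : 'I_d) (u : node d).

Definition Xpart (A : {set node d}) : {set 'I_d} := [set k | nX k \in A].

Lemma mem_Xset S k : (nX k \in Xset S) = (k \in S).
Proof. by apply: mem_imset => i j []. Qed.

Lemma inl_notin_Xset S b : inl b \notin Xset S.
Proof. by apply/imsetP => -[]. Qed.

Lemma mem_Xset_Xpart A u :
  (u \in Xset (Xpart A)) = [&& u != nE, u != nY & u \in A].
Proof.
by case: u => [[]|k]; rewrite ?(negbTE (inl_notin_Xset _ _)) ?mem_Xset ?inE.
Qed.

Lemma invariant_dsep S :
  Defs.invariant indep S <-> dsep G [set nY] [set nE] (Xset S).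
Proof. by apply: mfG; rewrite ?disjoints1 ?inl_notin_Xset ?inE. Qed.

Lemma paY_invariant : Defs.invariant indep (Xpart (pa G nY)).
Proof.
apply/invariant_dsep => -[a [b [[|v s] [/set1P-> /set1P-> //= last_vs]]]].
case/and3P=> _ /andP[adj_Yv adj_vs] ok_vs.
case/orP: adj_Yv => [GYv | GvY].
- have noC w : connect G v w -> w \notin Xset (Xpart (pa G nY)).
    rewrite mem_Xset_Xpart inE => vw; apply/and3P => -[_ _ GwY].
    move: (edge_not_connect_back acyclicG GwY).
    by rewrite (connect_trans (connect1 GYv) vw).
  have := path_connect (active_path_directed GYv noC adj_vs ok_vs) (mem_last v s).
  rewrite last_vs => /(connect_to_source sourceE) vE.
  by move: (sourceE nY); rewrite -vE GYv.
- have vC : v \in Xset (Xpart (pa G nY)).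
    rewrite mem_Xset_Xpart inE GvY andbT; apply/andP; split.
      by apply: contraNneq E_npaY => <-; rewrite inE.
    by apply: contraTneq GvY => ->; apply: acyclic_irrefl.
  case: s last_vs adj_vs ok_vs
    => [/= vE | z s _ _ /andP[/(triple_ok_collider vC) + _]].
    by move: vC; rewrite vE mem_Xset_Xpart eqxx.
  by rewrite (negbTE (acyclic_asym acyclicG GvY)).
Qed.

Lemma anY_setD1_invariant j :
  nX j \notin ch G nE -> nX j \notin paS G (an G nY :&: ch G nE) ->
  Defs.invariant indep (Xpart (an G nY :\ nX j)).
Proof.
move=> j_nchE j_npaS; apply/invariant_dsep/dsep_sym; set C := Xset _.
move=> -[a [b [[|v s] [/set1P-> /set1P-> //= last_vs]]]].
case/and3P=> uniq_Evs /andP[adj_Ev adj_vs] ok_vs.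
have inC u : [&& u != nE, u != nY, u != nX j & connect G u nY] -> u \in C.
  by case/and4P=> uE uY uj uYc; rewrite mem_Xset_Xpart !inE ancE // uE uY uj uYc.
have GEv : G nE v by move: adj_Ev; rewrite /adj (negbTE (sourceE v)) orbF.
(* Otherwise no descendant of v is conditioned on and the path would descend to Y. *)
have vY : connect G v nY.
  apply: contraT => nvY; rewrite -(negbTE nvY) -last_vs.
  apply: path_connect (mem_last v s); apply: active_path_directed GEv _ adj_vs ok_vs.
  move=> w vw; apply: contra nvY; rewrite mem_Xset_Xpart !inE ancE // => /and4P[_ _ _].
  by case/andP=> _; apply: connect_trans vw.
have vC : v \in C.
  apply: inC; rewrite vY andbT; apply/and3P; split.
  - by apply: contraTneq GEv => ->; apply: sourceE.
  - by apply: contraNneq E_npaY => <-; rewrite inE.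
  - by apply: contraNneq j_nchE => <-; rewrite inE.
case: s last_vs uniq_Evs adj_vs ok_vs
  => [/= vE | z s last_zs uniq_Evzs /andP[_ adj_zs]].
  by move: vC; rewrite vE mem_Xset_Xpart eqxx andbF.
case/andP=> /(triple_ok_collider vC)/andP[_ Gzv] ok_zs.
have zE : z != nE.
  by apply: contraTneq uniq_Evzs => ->; rewrite /= !inE eqxx !orbT.
have zC : z \in C.
  apply: inC; rewrite zE (connect_trans (connect1 Gzv) vY) andbT /=.
  apply/andP; split.
    by apply: contraNneq (edge_not_connect_back acyclicG Gzv) => ->.
  apply: contraNneq j_npaS => <-; apply/bigcupP; exists v; last by rewrite inE.
  rewrite !inE ancE // vY GEv !andbT.
  by apply: contraNneq E_npaY => <-; rewrite inE.
case: s last_zs uniq_Evzs adj_zs ok_zs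
  => [/= zY | w s _ _ _ /andP[/(triple_ok_collider zC) + _]].
  by move: zC; rewrite zY mem_Xset_Xpart eqxx andbF.
by rewrite (negbTE (acyclic_asym acyclicG Gzv)).
Qed.

Lemma invariant_mem S j :
  Defs.invariant indep S -> nX j \in pa G nY ->
  nX j \in ch G nE :|: paS G (an G nY :&: ch G nE) -> j \in S.
Proof.
move=> /invariant_dsep/dsep_sym sepS; rewrite inE => GjY jR.
apply/negPn/negP => jS; rewrite -mem_Xset in jS.
have GYj : G nY (nX j) = false := negbTE (acyclic_asym acyclicG GjY).
apply: sepS.
suff [s [last_s act_s]] : exists s, last nE s = nY /\ active_path G (Xset S) nE s.
  by exists nE, nY, s; rewrite !in_set1.
case/setUP: jR => [GEj | /bigcupP[k]].
  exists [:: nX j; nY]; split=> //; rewrite inE in GEj.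
  by rewrite /active_path /= /adj GEj GjY /triple_ok GYj andbF jS.
rewrite !inE ancE // => /andP[/andP[kY kYc] GEk] Gjk.
case: (boolP [exists w in Xset S, connect G k w]) => [kS | nkS].
  exists [:: k; nX j; nY]; split=> //.
  have kE : k != nE by apply: contraTneq GEk => ->; apply: sourceE.
  have kj : k != nX j by apply: contraTneq Gjk => ->; apply: acyclic_irrefl.
  rewrite /active_path /= !inE !negb_or (eq_sym nE) kE kY kj.
  rewrite /adj GEk Gjk GjY /triple_ok GEk Gjk kS.
  by rewrite (negbTE (acyclic_asym acyclicG Gjk)) jS.
apply: (directed_path_active acyclicG GEk kYc) => w kw.
by apply: contra nkS => wS; apply/exists_inP; exists w.
Qed.

End InvariantSets.

Theorem proposition4 (d : nat) (G : rel (node d))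
    (indep : {set node d} -> {set node d} -> {set node d} -> bool) :
  acyclic G ->
  markov_faithful G indep ->
  (forall v : node d, ~~ G v nE) ->
  nE \notin pa G nY ->
  S_ICP indep =
  [set j : 'I_d | nX j \in pa G nY :&: (ch G nE :|: paS G (an G nY :&: ch G nE))].
Proof.
move=> acyclicG mfG sourceE E_npaY.
have paY_inv := paY_invariant acyclicG mfG sourceE E_npaY.
rewrite /S_ICP; case: ifPn => [_ | /existsP[]]; last by exists (Xpart (pa G nY)).
apply/setP => j; rewrite inE; apply/bigcapP/idP => [in_all | /setIP[jpa jR] S invS].
- have jpa : nX j \in pa G nY by have := in_all _ paY_inv; rewrite inE.
  rewrite inE jpa; apply: contraT; rewrite inE negb_or => /andP[j_nchE j_npaS].
  have := in_all _ (anY_setD1_invariant acyclicG mfG sourceE E_npaY j_nchE j_npaS).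
  by rewrite !inE eqxx.
- exact: (invariant_mem acyclicG mfG sourceE invS jpa jR).
Qed.
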